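(* Let $(q,E)$ be an annotated CQ with $E=(E^+,E^-)$. Then a CQ $q'$ is a $\preceq^{\mathrm{cod}}$-repair for $(q,E)$ if and only if one of the following holds: (a) $q'$ is a $\preceq^{\mathrm{cod}}$-repair for $(q,(E^+,\emptyset))$ and $q'$ fits $(\emptyset,E^-)$; or (b) $q'$ is a $\preceq^{\mathrm{cod}}$-repair for $(q,(\emptyset,\widehat{E^-}))$ and $q'$ fits $(E^+,\emptyset)$, where $\widehat{E^-}=\{e\times\prod_{e'\in E^+}e'\mid e\in E^-\}$ if $E^+\neq\emptyset$, and $\widehat{E^-}=E^-$ otherwise.
   Context: Data examples of arity $k$ are pairs $(I,\mathbf a)$ with $I$ a finite instance and $\mathbf a$ a $k$-tuple of its values. A $k$-ary CQ is $q(x_1,\dots,x_k)\text{ :- }\alpha_1,\dots,\alpha_n$ (relational atoms, no constants, each answer variable in some atom). $[\![q]\!]$ is the set of data examples $(I,\mathbf a)$ with $\mathbf a\in q(I)$. $E=(E^+,E^-)$ is a pair of sets of data examples (positive, negative); $q$ fits $E$ iff $E^+\subseteq[\![q]\!]$ and $E^-\cap[\![q]\!]=\emptyset$. Direct product of instances: $I\times J$ has a fact $R(\langle a_1,b_1\rangle,\dots,\langle a_n,b_n\rangle)$ for each pair of facts $R(a_1,\dots,a_n)\in I$, $R(b_1,\dots,b_n)\in J$; for data examples $(I,(a_1,\dots,a_k))\times(J,(b_1,\dots,b_k))=(I\times J,(\langle a_1,b_1\rangle,\dots,\langle a_k,b_k\rangle))$; $\prod$ denotes the iterated product. $q_1\preceq^{\mathrm{cod}}_q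 q_2$ iff $[\![q]\!]\oplus[\![q_1]\!]\subseteq[\![q]\!]\oplus[\![q_2]\!]$ ($\oplus$ symmetric difference); $q_1\prec_q q_2$ iff $q_1\preceq_q q_2$ and not $q_2\preceq_q q_1$. A $\preceq^{\mathrm{cod}}$-repair for $(q,E)$ is a CQ $q'$ that fits $E$ such that there is no CQ $q''$ fitting $E$ with $q''\prec^{\mathrm{cod}}_q q'$ (candidate CQs use only relation symbols occurring in the input). *)

From Stdlib Require Import List Arith Bool.
Import ListNotations.

(* Values: a countable domain closed under pairing, so that the direct
   product of instances has values <a,b> = VPair a b. *)
Inductive val : Type :=
| VBase : nat -> val
| VPair : val -> val -> val.

Definition fact : Type := (nat * list val)%type.
Definition instance : Type := list fact.
Definition dexample : Type := (instance * list val)%type.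

Definition fact_over (S : list nat) (ar : nat -> nat) (f : fact) : Prop :=
  In (fst f) S /\ length (snd f) = ar (fst f).

Definition adom (I : instance) : list val := flat_map snd I.

Definition dex_wf (S : list nat) (ar : nat -> nat) (k : nat) (e : dexample) : Prop :=
  (forall f, In f (fst e) -> fact_over S ar f) /\
  length (snd e) = k /\
  (forall v, In v (snd e) -> In v (adom (fst e))).

Record cq : Type := CQ { ans : list nat ; atoms : list (nat * list nat) }.

Definition cq_over (S : list nat) (ar : nat -> nat) (k : nat) (q : cq) : Prop :=
  length (ans q) = k /\
  (forall at_, In at_ (atoms q) -> In (fst at_) S /\ length (snd at_) = ar (fst at_)) /\
  (forall x, In x (ans q) -> exists at_, In at_ (atoms q) /\ In x (snd at_)).

Definition answers (q : cq) (I : instance) (a : list val) : Prop :=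
  exists h : nat -> val,
    (forall at_, In at_ (atoms q) -> In (fst at_, map h (snd at_)) I) /\
    map h (ans q) = a.

Definition sem (q : cq) (e : dexample) : Prop := answers q (fst e) (snd e).

Definition fits (q : cq) (Ep Em : list dexample) : Prop :=
  (forall e, In e Ep -> sem q e) /\ (forall e, In e Em -> ~ sem q e).

Definition symdiff (P Q : dexample -> Prop) (e : dexample) : Prop :=
  (P e /\ ~ Q e) \/ (~ P e /\ Q e).

Definition cod_le (q q1 q2 : cq) : Prop :=
  forall e, symdiff (sem q) (sem q1) e -> symdiff (sem q) (sem q2) e.

Definition cod_lt (q q1 q2 : cq) : Prop := cod_le q q1 q2 /\ ~ cod_le q q2 q1.

Definition cod_repair (S : list nat) (ar : nat -> nat) (k : nat)
    (q : cq) (Ep Em : list dexample) (q' : cq) : Prop :=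
  cq_over S ar k q' /\ fits q' Ep Em /\
  ~ (exists q'', cq_over S ar k q'' /\ fits q'' Ep Em /\ cod_lt q q'' q').

Definition inst_prod (I J : instance) : instance :=
  flat_map (fun f =>
    flat_map (fun g =>
      if andb (Nat.eqb (fst f) (fst g)) (Nat.eqb (length (snd f)) (length (snd g)))
      then [(fst f, map (fun p => VPair (fst p) (snd p)) (combine (snd f) (snd g)))]
      else []) J) I.

Definition dex_prod (e1 e2 : dexample) : dexample :=
  (inst_prod (fst e1) (fst e2),
   map (fun p => VPair (fst p) (snd p)) (combine (snd e1) (snd e2))).

Definition hatEm (Ep Em : list dexample) : list dexample :=
  match Ep with
  | [] => Em
  | _ => map (fun e => fold_left dex_prod Ep e) Em
  end.

(* Let q' be a cod-repair for (q, E).  If [[q']] is not contained in [[q]],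
   then E+ cannot be contained in [[q]] either: otherwise the conjunction
   q /\ q' would still fit E and be strictly closer to q.  Hence a CQ q''
   fitting E+ that is cod-closer to q than q' cannot lie inside [[q]], so
   (by the canonical example of q'') it lies inside [[q']] and also rejects
   E-: this is case (a).  If [[q']] is contained in [[q]], every CQ cod-closer
   to q than q' keeps the examples of E+, which q and q' share, and a CQ
   accepting all of E+ rejects e iff it rejects e x prod E+ (products
   preserve answers, and the first projection is a homomorphism back):
   this is case (b). *)
From Stdlib Require Import List Arith Lia Classical.
Import ListNotations.

Lemma fits_split (q : cq) (Ep Em : list dexample) :
  fits q Ep Em <-> fits q Ep [] /\ fits q [] Em.
Proof. unfold fits; simpl; intuition. Qed.

Definition vpair (p : val * val) : val := VPair (fst p) (snd p).

Definition vfst (v : val) : val := match v with VPair a _ => a | _ => v end.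

Lemma map_vpair_combine (A : Type) (f g : A -> val) (l : list A) :
  map vpair (combine (map f l) (map g l)) = map (fun x => VPair (f x) (g x)) l.
Proof. induction l; simpl; f_equal; auto. Qed.

Lemma map_vfst_combine (a b : list val) :
  length a = length b -> map vfst (map vpair (combine a b)) = a.
Proof.
  revert b; induction a as [|x a IH]; intros [|y b] H; simpl in *; try discriminate; auto.
  f_equal. apply IH. lia.
Qed.

Lemma answers_length (q : cq) (I : instance) (a : list val) :
  answers q I a -> length a = length (ans q).
Proof. intros [h [_ <-]]. apply length_map. Qed.

Lemma sem_dex_prod (q : cq) (e1 e2 : dexample) :
  sem q e1 -> sem q e2 -> sem q (dex_prod e1 e2).
Proof.
  intros [h1 [A1 B1]] [h2 [A2 B2]].
  exists (fun x => VPair (h1 x) (h2 x)). split.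
  - intros at_ Hat. simpl. unfold inst_prod.
    apply in_flat_map. exists (fst at_, map h1 (snd at_)). split; [exact (A1 _ Hat)|].
    apply in_flat_map. exists (fst at_, map h2 (snd at_)). split; [exact (A2 _ Hat)|].
    simpl. rewrite Nat.eqb_refl, !length_map, Nat.eqb_refl. simpl. left.
    fold vpair. rewrite map_vpair_combine. reflexivity.
  - simpl. fold vpair. rewrite <- B1, <- B2, map_vpair_combine. reflexivity.
Qed.

Lemma sem_fold_dex_prod (q : cq) (Ep : list dexample) (e : dexample) :
  (forall e', In e' Ep -> sem q e') -> sem q e -> sem q (fold_left dex_prod Ep e).
Proof.
  revert e; induction Ep as [|d Ep IH]; intros e HEp He; simpl; auto.
  apply IH; [intros; apply HEp; simpl; auto|].
  apply sem_dex_prod; auto. apply HEp; simpl; auto.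
Qed.

(* Composing with [vfst] is a homomorphism from I x J back to I. *)
Lemma sem_dex_prod_l (q : cq) (e1 e2 : dexample) :
  length (snd e1) = length (snd e2) -> sem q (dex_prod e1 e2) -> sem q e1.
Proof.
  intros L [h [A B]]. exists (fun x => vfst (h x)). split.
  - intros at_ Hat. specialize (A _ Hat). simpl in A. unfold inst_prod in A.
    apply in_flat_map in A. destruct A as [f [Hf A]].
    apply in_flat_map in A. destruct A as [g [_ A]].
    destruct (Nat.eqb (fst f) (fst g) && Nat.eqb (length (snd f)) (length (snd g)))%bool
      eqn:E; [|destruct A].
    apply andb_prop in E. destruct E as [_ E]. apply Nat.eqb_eq in E.
    destruct A as [A|[]]. injection A as Hfst Hsnd. fold vpair in Hsnd.
    rewrite <- map_map, <- Hsnd, map_vfst_combine by exact E.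
    destruct f; simpl in *; subst; exact Hf.
  - rewrite <- map_map, B. simpl. fold vpair. apply map_vfst_combine. exact L.
Qed.

Lemma sem_fold_dex_prod_inv (q : cq) (k : nat) (Ep : list dexample) (e : dexample) :
  (forall e', In e' Ep -> length (snd e') = k) -> length (snd e) = k ->
  sem q (fold_left dex_prod Ep e) -> sem q e.
Proof.
  revert e; induction Ep as [|d Ep IH]; intros e LEp Le Hs; simpl in *; auto.
  apply IH in Hs.
  - eapply sem_dex_prod_l; [|exact Hs]. rewrite Le, LEp; auto.
  - intros; apply LEp; auto.
  - simpl. rewrite length_map, length_combine, Le, LEp; auto. lia.
Qed.

Lemma fits_hatEm (r : cq) (k : nat) (Ep Em : list dexample) :
  (forall e, In e Ep -> length (snd e) = k) ->
  (forall e, In e Em -> length (snd e) = k) ->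
  fits r Ep [] -> (fits r [] (hatEm Ep Em) <-> fits r [] Em).
Proof.
  intros LEp LEm [HEp _].
  unfold fits; simpl. split; intros [_ Hneg]; split; try (intros _ []).
  all: destruct Ep as [|d Ep]; simpl in *; [exact Hneg|].
  - intros e He Hs. apply (Hneg (fold_left dex_prod Ep (dex_prod e d))).
    + apply in_map_iff. exists e; auto.
    + apply (sem_fold_dex_prod r (d :: Ep) e); auto.
  - intros e He Hs. apply in_map_iff in He. destruct He as [e0 [<- He0]].
    apply (Hneg e0 He0). apply (sem_fold_dex_prod_inv r k (d :: Ep) e0); auto.
Qed.

Definition cq_contained (q1 q2 : cq) : Prop := forall e, sem q1 e -> sem q2 e.

Definition canonical_dex (q : cq) : dexample :=
  (map (fun at_ => (fst at_, map VBase (snd at_))) (atoms q), map VBase (ans q)).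

Lemma sem_canonical_dex (q : cq) : sem q (canonical_dex q).
Proof.
  exists VBase. split; auto. intros at_ H. simpl.
  apply in_map_iff. exists at_; auto.
Qed.

Lemma canonical_dex_contained (q1 q2 : cq) :
  sem q2 (canonical_dex q1) -> cq_contained q1 q2.
Proof.
  intros [h [A B]] e [g [Ag Bg]].
  set (g' := fun v => match v with VBase n => g n | _ => g 0 end).
  exists (fun x => g' (h x)). split.
  - intros at_ Hat. specialize (A _ Hat). simpl in A. apply in_map_iff in A.
    destruct A as [at1 [E1 H1]]. injection E1 as Efst Esnd.
    rewrite <- map_map, <- Esnd, <- Efst, map_map. exact (Ag _ H1).
  - rewrite <- map_map, B. simpl. rewrite map_map. exact Bg.
Qed.

(* The conjunction of two k-ary CQs is built from a query with two answer
   tuples (the disjoint union of both bodies), whose answer variables are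
   then identified position by position. *)
Record bicq : Type :=
  BiCQ { bi_atoms : list (nat * list nat) ; bi_left : list nat ; bi_right : list nat }.

Definition bi_answers (d : bicq) (I : instance) (a b : list val) : Prop :=
  exists h : nat -> val,
    (forall at_, In at_ (bi_atoms d) -> In (fst at_, map h (snd at_)) I) /\
    map h (bi_left d) = a /\ map h (bi_right d) = b.

Definition bi_left_cq (d : bicq) : cq := CQ (bi_left d) (bi_atoms d).

Definition rename_atom (f : nat -> nat) (at_ : nat * list nat) : nat * list nat :=
  (fst at_, map f (snd at_)).

Definition subst_var (v u w : nat) : nat := if Nat.eqb w v then u else w.

Definition bi_subst (v u : nat) (d : bicq) : bicq :=
  BiCQ (map (rename_atom (subst_var v u)) (bi_atoms d))
       (map (subst_var v u) (bi_left d)) (map (subst_var v u) (bi_right d)).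

Definition bi_unify (i : nat) (d : bicq) : bicq :=
  bi_subst (nth i (bi_right d) 0) (nth i (bi_left d) 0) d.

Fixpoint bi_unify_upto (j : nat) (d : bicq) : bicq :=
  match j with 0 => d | S j => bi_unify j (bi_unify_upto j d) end.

Lemma bi_unify_upto_length_left (j : nat) (d : bicq) :
  length (bi_left (bi_unify_upto j d)) = length (bi_left d).
Proof. induction j; simpl; auto. rewrite length_map; auto. Qed.

Lemma bi_unify_upto_length_right (j : nat) (d : bicq) :
  length (bi_right (bi_unify_upto j d)) = length (bi_right d).
Proof. induction j; simpl; auto. rewrite length_map; auto. Qed.

Lemma bi_answers_unify (d : bicq) (i : nat) (I : instance) (a b : list val) :
  i < length (bi_left d) -> i < length (bi_right d) ->
  (bi_answers (bi_unify i d) I a b <->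
   bi_answers d I a b /\ nth_error a i = nth_error b i).
Proof.
  intros Li Ri. unfold bi_unify.
  set (u := nth i (bi_left d) 0). set (v := nth i (bi_right d) 0).
  assert (Hu : nth_error (bi_left d) i = Some u) by (apply nth_error_nth'; auto).
  assert (Hv : nth_error (bi_right d) i = Some v) by (apply nth_error_nth'; auto).
  split.
  - intros [h [A [<- <-]]]. split.
    + exists (fun w => h (subst_var v u w)). split; [|split; symmetry; apply map_map].
      intros at_ Hat. specialize (A (rename_atom (subst_var v u) at_)).
      simpl in A. rewrite map_map in A. apply A, in_map, Hat.
    + simpl. rewrite !nth_error_map, Hu, Hv. simpl.
      unfold subst_var. rewrite Nat.eqb_refl. destruct (Nat.eqb u v) eqn:E; auto.
  - intros [[h [A [<- <-]]] N].
    assert (Huv : h u = h v).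
    { rewrite !nth_error_map, Hu, Hv in N. injection N; auto. }
    assert (Hsubst : forall l, map h (map (subst_var v u) l) = map h l).
    { intro l. rewrite map_map. apply map_ext. intro w. unfold subst_var.
      destruct (Nat.eqb w v) eqn:E; auto. apply Nat.eqb_eq in E. subst; auto. }
    exists h. simpl. rewrite !Hsubst. split; auto.
    intros at_ Hat. apply in_map_iff in Hat. destruct Hat as [at0 [<- H0]].
    simpl. rewrite Hsubst. apply A, H0.
Qed.

Lemma bi_answers_unify_upto (d : bicq) (j : nat) (I : instance) (a b : list val) :
  j <= length (bi_left d) -> j <= length (bi_right d) ->
  (bi_answers (bi_unify_upto j d) I a b <->
   bi_answers d I a b /\ forall i, i < j -> nth_error a i = nth_error b i).
Proof.
  induction j; intros Lj Rj; simpl.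
  - split; [intros H; split; auto; intros; lia | tauto].
  - rewrite bi_answers_unify
      by (rewrite ?bi_unify_upto_length_left, ?bi_unify_upto_length_right; lia).
    rewrite IHj by lia. split.
    + intros [[H1 H2] H3]. split; auto. intros i Hi.
      destruct (Nat.eq_dec i j); subst; auto. apply H2; lia.
    + intros [H1 H2]. split; [split|]; auto.
Qed.

Lemma cq_over_bi_subst (S : list nat) (ar : nat -> nat) (k v u : nat) (d : bicq) :
  cq_over S ar k (bi_left_cq d) -> cq_over S ar k (bi_left_cq (bi_subst v u d)).
Proof.
  intros [L [At Sf]]. split; [|split]; simpl in *.
  - rewrite length_map; auto.
  - intros at_ Hat. apply in_map_iff in Hat. destruct Hat as [at0 [<- H0]].
    simpl. rewrite length_map. apply At, H0.
  - intros x Hx. apply in_map_iff in Hx. destruct Hx as [x0 [<- H0]].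
    destruct (Sf x0 H0) as [at0 [A0 B0]].
    exists (rename_atom (subst_var v u) at0). split; apply in_map; auto.
Qed.

Lemma cq_over_bi_unify_upto (S : list nat) (ar : nat -> nat) (k j : nat) (d : bicq) :
  cq_over S ar k (bi_left_cq d) -> cq_over S ar k (bi_left_cq (bi_unify_upto j d)).
Proof. induction j; simpl; auto. intros; apply cq_over_bi_subst; auto. Qed.

Definition even_var (n : nat) : nat := 2 * n.
Definition odd_var (n : nat) : nat := 2 * n + 1.

Definition bi_pair (q1 q2 : cq) : bicq :=
  BiCQ (map (rename_atom even_var) (atoms q1) ++ map (rename_atom odd_var) (atoms q2))
       (map even_var (ans q1)) (map odd_var (ans q2)).

Lemma bi_answers_pair (q1 q2 : cq) (I : instance) (a b : list val) :
  bi_answers (bi_pair q1 q2) I a b <-> answers q1 I a /\ answers q2 I b.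
Proof.
  split.
  - intros [h [A [B C]]]. split.
    + exists (fun n => h (even_var n)). split; [|rewrite <- map_map; auto].
      intros at_ Hat. rewrite <- map_map. apply (A (rename_atom even_var at_)).
      apply in_or_app. left. apply in_map, Hat.
    + exists (fun n => h (odd_var n)). split; [|rewrite <- map_map; auto].
      intros at_ Hat. rewrite <- map_map. apply (A (rename_atom odd_var at_)).
      apply in_or_app. right. apply in_map, Hat.
  - intros [[h1 [A1 B1]] [h2 [A2 B2]]].
    set (h := fun w => if Nat.even w then h1 (Nat.div2 w) else h2 (Nat.div2 w)).
    assert (E1 : forall l, map h (map even_var l) = map h1 l).
    { intro l. rewrite map_map. apply map_ext. intro n. unfold h, even_var.
      rewrite Nat.even_even, Nat.div2_double. auto. }
    assert (E2 : forall l, map h (map odd_var l) = map h2 l).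
    { intro l. rewrite map_map. apply map_ext. intro n. unfold h, odd_var.
      rewrite Nat.even_odd, Nat.div2_odd'. auto. }
    exists h. simpl. rewrite E1, E2. split; auto.
    intros at_ Hat. apply in_app_or in Hat.
    destruct Hat as [Hat|Hat]; apply in_map_iff in Hat; destruct Hat as [at0 [<- H0]];
      simpl; [rewrite E1; apply A1 | rewrite E2; apply A2]; exact H0.
Qed.

Lemma cq_over_bi_pair (S : list nat) (ar : nat -> nat) (k : nat) (q1 q2 : cq) :
  cq_over S ar k q1 -> cq_over S ar k q2 -> cq_over S ar k (bi_left_cq (bi_pair q1 q2)).
Proof.
  intros [L1 [At1 Sf1]] [_ [At2 _]]. split; [|split]; simpl.
  - rewrite length_map; auto.
  - intros at_ Hat. apply in_app_or in Hat.
    destruct Hat as [Hat|Hat]; apply in_map_iff in Hat; destruct Hat as [at0 [<- H0]];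
      simpl; rewrite length_map; auto.
  - intros x Hx. apply in_map_iff in Hx. destruct Hx as [x0 [<- H0]].
    destruct (Sf1 x0 H0) as [at0 [A0 B0]]. exists (rename_atom even_var at0). split.
    + apply in_or_app. left. apply in_map, A0.
    + apply in_map, B0.
Qed.

Definition cq_conj (q1 q2 : cq) : cq :=
  bi_left_cq (bi_unify_upto (length (ans q1)) (bi_pair q1 q2)).

Lemma cq_over_conj (S : list nat) (ar : nat -> nat) (k : nat) (q1 q2 : cq) :
  cq_over S ar k q1 -> cq_over S ar k q2 -> cq_over S ar k (cq_conj q1 q2).
Proof. intros; apply cq_over_bi_unify_upto, cq_over_bi_pair; auto. Qed.

Lemma sem_cq_conj (q1 q2 : cq) (e : dexample) :
  length (ans q1) = length (ans q2) -> (sem (cq_conj q1 q2) e <-> sem q1 e /\ sem q2 e).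
Proof.
  intros L. destruct e as [I a]. unfold sem, cq_conj. simpl.
  assert (Hunify : forall b, bi_answers (bi_unify_upto (length (ans q1)) (bi_pair q1 q2)) I a b
            <-> (answers q1 I a /\ answers q2 I b) /\
                forall i, i < length (ans q1) -> nth_error a i = nth_error b i).
  { intro b. rewrite bi_answers_unify_upto by (simpl; rewrite !length_map; lia).
    rewrite bi_answers_pair. tauto. }
  split.
  - intros [h [A B]].
    destruct (proj1 (Hunify (map h (bi_right (bi_unify_upto (length (ans q1))
                                               (bi_pair q1 q2))))))
      as [[H1 H2] N]; [exists h; auto|].
    replace a with (map h (bi_right (bi_unify_upto (length (ans q1)) (bi_pair q1 q2))))
      at 2; [tauto|].
    apply nth_error_ext. intro i. destruct (Nat.lt_ge_cases i (length (ans q1))).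
    + symmetry. apply N; auto.
    + apply answers_length in H1, H2.
      rewrite !(proj2 (nth_error_None _ _)); auto; lia.
  - intros [H1 H2]. destruct (proj2 (Hunify a)) as [h [A [B _]]]; [tauto|].
    exists h. auto.
Qed.

Lemma cod_le_common (q q1 q2 : cq) (e : dexample) :
  cod_le q q1 q2 -> sem q e -> sem q2 e -> sem q1 e.
Proof.
  intros Hle Hq Hq2. apply NNPP. intro Hq1.
  destruct (Hle e (or_introl (conj Hq Hq1))) as [[_ X]|[X _]]; auto.
Qed.

Lemma cod_le_canonical_dex (q q1 q2 : cq) :
  cod_le q q1 q2 -> sem q (canonical_dex q1) \/ sem q2 (canonical_dex q1).
Proof.
  intros Hle. destruct (classic (sem q (canonical_dex q1))) as [Hq|Hq]; auto.
  destruct (Hle _ (or_intror (conj Hq (sem_canonical_dex q1)))) as [[X _]|[_ X]]; tauto.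
Qed.

Lemma cod_lt_conj (q q' r : cq) :
  (forall e, sem r e <-> sem q e /\ sem q' e) -> ~ cq_contained q' q -> cod_lt q r q'.
Proof.
  intros Hr Hnot. split.
  - intros e [[X Y]|[X Y]].
    + left. split; auto. intro Z. apply Y, Hr; auto.
    + apply Hr in Y. tauto.
  - intro Hle. apply Hnot. intros e He. apply NNPP. intro Hq.
    destruct (Hle e (or_intror (conj Hq He))) as [[X _]|[_ Y]]; [tauto|].
    apply Hr in Y. tauto.
Qed.

Lemma cod_repair_transfer (S : list nat) (ar : nat -> nat) (k : nat) (q : cq)
    (Ep Em Ep' Em' : list dexample) (q' : cq) :
  cod_repair S ar k q Ep Em q' -> fits q' Ep' Em' ->
  (forall q'', cq_over S ar k q'' -> fits q'' Ep' Em' -> cod_lt q q'' q' -> fits q'' Ep Em) ->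
  cod_repair S ar k q Ep' Em' q'.
Proof.
  intros [Ov [_ Hmin]] Hfit Htransfer. split; [exact Ov|split; [exact Hfit|]].
  intros [q'' [Ov'' [Hfit'' Hlt]]]. apply Hmin. exists q''. auto.
Qed.

Lemma cod_repair_positive (S : list nat) (ar : nat -> nat) (k : nat) (q : cq)
    (Ep Em : list dexample) (q' : cq) :
  cq_over S ar k q -> cod_repair S ar k q Ep Em q' -> ~ cq_contained q' q ->
  cod_repair S ar k q Ep [] q'.
Proof.
  intros Hq Hrep Hnot. pose proof Hrep as [Ov [Hfit Hmin]].
  apply fits_split in Hfit as [HfitP HfitM].
  apply (cod_repair_transfer _ _ _ _ _ _ _ _ _ Hrep HfitP).
  intros q'' _ Hfit'' [Hle _]. apply fits_split. split; [exact Hfit''|].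
  destruct (cod_le_canonical_dex _ _ _ Hle) as [Hc|Hc].
  - (* then E+ lies in [[q]], and q /\ q' beats q' *)
    exfalso. apply Hmin. exists (cq_conj q q').
    assert (Hconj : forall e, sem (cq_conj q q') e <-> sem q e /\ sem q' e)
      by (intro; apply sem_cq_conj; destruct Hq, Ov; congruence).
    split; [apply cq_over_conj; auto|split; [|apply cod_lt_conj; auto]].
    destruct HfitP as [Hpos _], HfitM as [_ Hneg], Hfit'' as [Hpos'' _].
    split.
    + intros e He. apply Hconj. split; auto.
      apply (canonical_dex_contained _ _ Hc), Hpos'', He.
    + intros e He Hs. apply Hconj in Hs. apply (Hneg e); tauto.
  - destruct HfitM as [_ Hneg]. split; [intros _ []|].
    intros e He Hs. apply (Hneg e He), (canonical_dex_contained _ _ Hc), Hs.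
Qed.

Lemma cod_repair_hatEm (S : list nat) (ar : nat -> nat) (k : nat) (q : cq)
    (Ep Em : list dexample) (q' : cq) :
  (forall e, In e Ep -> length (snd e) = k) ->
  (forall e, In e Em -> length (snd e) = k) ->
  cod_repair S ar k q Ep Em q' -> cq_contained q' q ->
  cod_repair S ar k q [] (hatEm Ep Em) q'.
Proof.
  intros LEp LEm Hrep Hsub. pose proof Hrep as [_ [Hfit _]].
  apply fits_split in Hfit as [HfitP HfitM].
  apply (cod_repair_transfer _ _ _ _ _ _ _ _ _ Hrep).
  { apply (fits_hatEm _ k); auto. }
  intros q'' _ Hfit'' [Hle _].
  assert (HfitP'' : fits q'' Ep []).
  { split; [|intros _ []]. intros e He.
    destruct HfitP as [Hpos _].
    apply (cod_le_common q q'' q'); auto. }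
  apply fits_split. split; auto. apply (fits_hatEm _ k Ep); auto.
Qed.

Theorem proposition20 (S : list nat) (ar : nat -> nat) (k : nat)
    (q : cq) (Ep Em : list dexample) :
  cq_over S ar k q ->
  (forall e, In e Ep -> dex_wf S ar k e) ->
  (forall e, In e Em -> dex_wf S ar k e) ->
  forall q' : cq,
    cod_repair S ar k q Ep Em q' <->
    ((cod_repair S ar k q Ep [] q' /\ fits q' [] Em) \/
     (cod_repair S ar k q [] (hatEm Ep Em) q' /\ fits q' Ep [])).
Proof.
  intros Hq HEp HEm q'.
  assert (LEp : forall e, In e Ep -> length (snd e) = k) by (intros e He; apply HEp, He).
  assert (LEm : forall e, In e Em -> length (snd e) = k) by (intros e He; apply HEm, He).
  split.
  - intros Hrep. pose proof Hrep as [_ [Hfit _]].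
    apply fits_split in Hfit as [HfitP HfitM].
    destruct (classic (cq_contained q' q)) as [Hsub|Hnot].
    + right. split; [apply cod_repair_hatEm|]; auto.
    + left. split; [apply (cod_repair_positive _ _ _ _ _ Em)|]; auto.
  - intros [[Hrep HfitM]|[Hrep HfitP]]; pose proof Hrep as [_ [Hfit _]].
    + apply (cod_repair_transfer _ _ _ _ _ _ _ _ _ Hrep); [apply fits_split; auto|].
      intros q'' _ Hfit'' _. apply fits_split in Hfit''. tauto.
    + assert (HfitM : fits q' [] Em) by (apply (fits_hatEm _ k Ep); auto).
      apply (cod_repair_transfer _ _ _ _ _ _ _ _ _ Hrep); [apply fits_split; auto|].
      intros q'' _ Hfit'' _. apply fits_split in Hfit'' as [HfitP'' HfitM''].
      apply (fits_hatEm _ k); auto.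
Qed.
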